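(* Let $\mathcal{M}=(E_t,\mathcal{T})$ be a simple oriented matroid, $a\in E_t$, and $k$ an integer with $1\le k\le|\mathcal{T}|/2$. Put $h=\lfloor(|\mathcal{T}|-k+1)/2\rfloor$, $B=\binom{|\mathcal{T}|-k}{h}$, $\mathcal{P}_a=\bigcup_{e\in E_t-\{a\}}\binom{\mathcal{T}^+_e(\mathcal{M})}{h}$, $\mathcal{N}^+=\binom{\mathcal{T}^+_a(\mathcal{M})}{h}-\mathcal{P}_a$, $\mathcal{N}^-=\binom{\mathcal{T}^-_a(\mathcal{M})}{h}-\mathcal{P}_a$. For families $\mathcal{G}$ of tope sets write $U_{\mathcal{G}}=\bigcup_{G\in\mathcal{G}}G$ (with $U_\emptyset=\emptyset$). Define \[ S_1(Q)=\sum_{\substack{\mathcal{G}''\subseteq\mathcal{P}_a:\ 0\le\#\mathcal{G}''\le B-1,\\ |U_{\mathcal{G}''}|\le|\mathcal{T}|-k}}(-1)^{\#\mathcal{G}''}\Biggl(\sum_{\substack{\mathcal{G}'\subseteq\mathcal{N}^-:\ 1\le\#\mathcal{G}'\le B-\#\mathcal{G}'',\\ |U_{\mathcal{G}'}|\le|\mathcal{T}|-k}}(-1)^{\#\mathcal{G}'}Q(\mathcal{G}',\mathcal{G}'')-\sum_{\substack{\mathcal{G}'\subseteq\mathcal{N}^+:\ 1\le\#\mathcal{G}'\le B-\#\mathcal{G}'',\\ |U_{\mathcal{G}'}|\le|\mathcal{T}|-k}}(-1)^{\#\mathcal{G}'}Q(\mathcal{G}',\mathcal{G}'')\Biggr)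 \] and \[ S_2(\mathfrak{Q})=\sum_{\substack{G''\in\boldsymbol{\mathcal{E}}(\mathcal{P}_a):\\ 0\le|G''|\le|\mathcal{T}|-k}}\mu(\hat0,G'')\Biggl(\sum_{\substack{G'\in\boldsymbol{\mathcal{E}}(\mathcal{N}^-):\\ 0<|G'|\le|\mathcal{T}|-k}}\mu(\hat0,G')\,\mathfrak{Q}(G',G'')-\sum_{\substack{G'\in\boldsymbol{\mathcal{E}}(\mathcal{N}^+):\\ 0<|G'|\le|\mathcal{T}|-k}}\mu(\hat0,G')\,\mathfrak{Q}(G',G'')\Biggr), \] where each $\mu$ is the Möbius function of the lattice in which its arguments lie, and $G''=\hat0$ is interpreted as $\emptyset$. (i) With $Q(\mathcal{G}',\mathcal{G}'')=\binom{|\mathcal{T}|-|U_{\mathcal{G}'\cup\mathcal{G}''}|}{k}$ and $\mathfrak{Q}(G',G'')=\binom{|\mathcal{T}|-|G'\cup G''|}{k}$, both $S_1(Q)$ and $S_2(\mathfrak{Q})$ equal $\kappa^{\ast}_k({}_{-a}\mathcal{M})-\kappa^{\ast}_k(\mathcal{M})$. (ii) With $Q(\mathcal{G}',\mathcal{G}'')=\sum_{j=0}^{k}\binom{|U\cup-U|-|U|}{j}\binom{\frac12(|\mathcal{T}|-|U\cup-U|)}{k-j}2^{k-j}$ where $U=U_{\mathcal{G}'\cup\mathcal{G}''}$, and $\mathfrak{Q}(G',G'')$ given by the same expression with $U=G'\cup G''$, both $S_1(Q)$ and $S_2(\mathfrak{Q})$ equal $\mathring{\kappa}^{\ast}_k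({}_{-a}\mathcal{M})-\mathring{\kappa}^{\ast}_k(\mathcal{M})$.
   Context: Let $t\ge 1$ and $E_t=\{1,\dots,t\}$. $\mathcal{M}=(E_t,\mathcal{T})$ is a simple oriented matroid (no loops, parallel or antiparallel elements) with set of topes $\mathcal{T}\subseteq\{+,-\}^{E_t}$, closed under negation. For $e\in E_t$, $\mathcal{T}^+_e(\mathcal{M})=\{T\in\mathcal{T}: T(e)=+\}$ and $\mathcal{T}^-_e(\mathcal{M})=\{T\in\mathcal{T}: T(e)=-\}$. For $G\subseteq\mathcal{T}$, $-G=\{-T:T\in G\}$. $\binom{X}{j}$ denotes the family of $j$-element subsets of $X$; numerical binomial coefficients $\binom{n}{j}$ are $0$ when $j>n$ or $j<0$. For $a\in E_t$, ${}_{-a}\mathcal{M}$ is the reorientation of $\mathcal{M}$ on $\{a\}$: the oriented matroid on $E_t$ whose topes are the sign vectors obtained from the topes of $\mathcal{M}$ by negating the $a$-th component. For a family $\mathcal{G}$ of subsets of $\mathcal{T}$, $\boldsymbol{\mathcal{E}}(\mathcal{G})$ is the lattice of all unions $\bigcup_{F\in\mathcal{F}}F$ over nonempty subfamilies $\mathcal{F}\subseteq\mathcal{G}$, ordered by inclusion, with a new least element $\hat0$ adjoined and interpreted as the empty set ($|\hat0|=0$). A tope committee for an oriented matroid on $E_t$ with tope set $\mathcal{T}'$ is a subset $\mathcal{K}^{\ast}\subset\mathcal{T}'$ with $|\{T\in\mathcal{K}^{\ast}: T(e)=+\}|>\tfrac12|\mathcal{K}^{\ast}|$ for every $e\in E_t$;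 $\kappa^{\ast}_k(\cdot)$ counts tope committees of cardinality $k$, and $\mathring{\kappa}^{\ast}_k(\cdot)$ counts those containing no pair of opposite topes $\{T,-T\}$. *)

From HB Require Import structures.
From mathcomp Require Import all_boot all_order all_algebra.
Set Implicit Arguments. Unset Strict Implicit. Unset Printing Implicit Defensive.
Import Order.TTheory GRing.Theory Num.Theory.

(* Covectors: sign vectors in {-,0,+}^{E_t}; None = 0, Some true = +, Some false = -.
   E_t = {1,...,t} is represented by 'I_t. *)
Definition covec (t : nat) := {ffun 'I_t -> option bool}.
(* Topes: sign vectors in {+,-}^{E_t}; true = +, false = -. *)
Definition tvec (t : nat) := {ffun 'I_t -> bool}.

Definition cneg t (X : covec t) : covec t := [ffun e => omap negb (X e)].
Definition ccomp t (X Y : covec t) : covec t :=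
  [ffun e => if X e is Some b then Some b else Y e].
Definition csep t (X Y : covec t) (f : 'I_t) : bool :=
  (X f != None) && (X f == omap negb (Y f)).

(* Covector axioms of an oriented matroid (Bjorner et al., Def. 4.1.1). *)
Definition is_OM t (L : {set covec t}) : Prop :=
  [/\ [ffun _ => None] \in L,
      (forall X, X \in L -> cneg X \in L),
      (forall X Y, X \in L -> Y \in L -> ccomp X Y \in L) &
      (forall X Y e, X \in L -> Y \in L -> csep X Y e ->
         exists2 Z, Z \in L &
           Z e = None /\ (forall f, ~~ csep X Y f -> Z f = ccomp X Y f))].

Definition is_loop t (L : {set covec t}) (e : 'I_t) : Prop :=
  forall X, X \in L -> X e = None.
Definition parallel t (L : {set covec t}) (e f : 'I_t) : Prop :=
  forall X, X \in L -> X e = X f.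
Definition antiparallel t (L : {set covec t}) (e f : 'I_t) : Prop :=
  forall X, X \in L -> X e = omap negb (X f).
Definition simple_OM t (L : {set covec t}) : Prop :=
  (forall e, ~ is_loop L e) /\
  (forall e f, e != f -> ~ parallel L e f /\ ~ antiparallel L e f).

(* Topes = maximal covectors; for a loopless OM these are exactly the
   covectors of full support, identified with sign vectors in {+,-}^{E_t}. *)
Definition topes t (L : {set covec t}) : {set tvec t} :=
  [set T : tvec t | [ffun e => Some (T e)] \in L].

Definition tneg t (T : tvec t) : tvec t := [ffun e => ~~ T e].
Definition flip_at t (a : 'I_t) (T : tvec t) : tvec t :=
  [ffun e => if e == a then ~~ T e else T e].
Definition reorient_topes t (a : 'I_t) (Tp : {set tvec t}) : {set tvec t} :=
  [set flip_at a T | T in Tp].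

Definition Tplus t (Tp : {set tvec t}) (e : 'I_t) : {set tvec t} :=
  [set T in Tp | T e].
Definition Tminus t (Tp : {set tvec t}) (e : 'I_t) : {set tvec t} :=
  [set T in Tp | ~~ T e].

Definition is_committee t (Tp K : {set tvec t}) : bool :=
  (K \subset Tp) && [forall e : 'I_t, #|K| < 2 * #|[set T in K | T e]| ].
Definition kappa t (k : nat) (Tp : {set tvec t}) : nat :=
  #|[set K : {set tvec t} | is_committee Tp K && (#|K| == k)]|.
Definition kappa_ring t (k : nat) (Tp : {set tvec t}) : nat :=
  #|[set K : {set tvec t} | [&& is_committee Tp K, #|K| == k &
        [forall T, (T \in K) ==> (tneg T \notin K)]]]|.

Definition subsets_of t (X : {set tvec t}) (h : nat) : {set {set tvec t}} :=
  [set G : {set tvec t} | (G \subset X) && (#|G| == h)].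
Definition Pfam t (Tp : {set tvec t}) (a : 'I_t) (h : nat) :=
  \bigcup_(e : 'I_t | e != a) subsets_of (Tplus Tp e) h.
Definition Nplus t (Tp : {set tvec t}) (a : 'I_t) (h : nat) :=
  subsets_of (Tplus Tp a) h :\: Pfam Tp a h.
Definition Nminus t (Tp : {set tvec t}) (a : 'I_t) (h : nat) :=
  subsets_of (Tminus Tp a) h :\: Pfam Tp a h.

Definition Ufam t (F : {set {set tvec t}}) : {set tvec t} :=
  \bigcup_(G in F) G.

(* mu(x,x) = 1, mu(x,y) = - sum_{x <= z < y} mu(x,z) for x < y, 0 otherwise.
   Defined by recursion with fuel #|P|+1, which exceeds every chain length. *)
Fixpoint mob_rec (T : finType) (P : {set T}) (le : rel T) (n : nat) (x y : T)
    : int :=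
  match n with
  | 0 => 0%R
  | n'.+1 =>
      if x == y then 1%R
      else if le x y then
        (- \sum_(z in P | [&& le x z, le z y & z != y]) mob_rec P le n' x z)%R
      else 0%R
  end.
Definition mobius (T : finType) (P : {set T}) (le : rel T) (x y : T) : int :=
  mob_rec P le #|P|.+1 x y.

(* Elements: None = the adjoined least element 0^, Some A = the union A of a
   nonempty subfamily of G. Ordered by inclusion, 0^ below everything. *)
Definition Elat t (G : {set {set tvec t}}) : {set option {set tvec t}} :=
  None |: [set Some (Ufam F) | F in [set F : {set {set tvec t}} |
                                      (F \subset G) && (F != set0)]].
Definition Ele t : rel (option {set tvec t}) :=
  fun x y => match x, y with
             | None, _ => true
             | Some _, None => false
             | Some A, Some B => A \subset B
             end.
Definition oset t (x : option {set tvec t}) : {set tvec t} :=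
  if x is Some A then A else set0.
Definition osize t (x : option {set tvec t}) : nat := #|oset x|.

Definition hpar t (Tp : {set tvec t}) (k : nat) : nat := (#|Tp| - k + 1) %/ 2.
Definition Bpar t (Tp : {set tvec t}) (k : nat) : nat :=
  'C(#|Tp| - k, hpar Tp k).

Local Open Scope ring_scope.

Definition S1 t (Tp : {set tvec t}) (a : 'I_t) (k : nat)
    (Q : {set {set tvec t}} -> {set {set tvec t}} -> int) : int :=
  let n := #|Tp| in let h := hpar Tp k in let B := Bpar Tp k in
  let Pa := Pfam Tp a h in
  \sum_(G2 : {set {set tvec t}} |
          [&& G2 \subset Pa, (#|G2| < B)%N & (#|Ufam G2| <= n - k)%N])
    (-1) ^+ #|G2| *
    ( \sum_(G1 : {set {set tvec t}} |
          [&& G1 \subset Nminus Tp a h, (1 <= #|G1|)%N,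
              (#|G1| + #|G2| <= B)%N & (#|Ufam G1| <= n - k)%N])
        (-1) ^+ #|G1| * Q G1 G2
    - \sum_(G1 : {set {set tvec t}} |
          [&& G1 \subset Nplus Tp a h, (1 <= #|G1|)%N,
              (#|G1| + #|G2| <= B)%N & (#|Ufam G1| <= n - k)%N])
        (-1) ^+ #|G1| * Q G1 G2 ).

Definition S2 t (Tp : {set tvec t}) (a : 'I_t) (k : nat)
    (Q : {set tvec t} -> {set tvec t} -> int) : int :=
  let n := #|Tp| in let h := hpar Tp k in
  let EP := Elat (Pfam Tp a h) in
  let EM := Elat (Nminus Tp a h) in
  let EN := Elat (Nplus Tp a h) in
  \sum_(y2 in EP | (osize y2 <= n - k)%N)
    mobius EP (@Ele t) None y2 *
    ( \sum_(y1 in EM | (0 < osize y1 <= n - k)%N)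
        mobius EM (@Ele t) None y1 * Q (oset y1) (oset y2)
    - \sum_(y1 in EN | (0 < osize y1 <= n - k)%N)
        mobius EN (@Ele t) None y1 * Q (oset y1) (oset y2) ).

Definition Qbin t (Tp : {set tvec t}) (k : nat) (U : {set tvec t}) : int :=
  ('C(#|Tp| - #|U|, k))%:Z.
Definition Qring t (Tp : {set tvec t}) (k : nat) (U : {set tvec t}) : int :=
  let UU := U :|: [set tneg T | T in U] in
  (\sum_(0 <= j < k.+1)
     'C(#|UU| - #|U|, j) * 'C((#|Tp| - #|UU|) %/ 2, k - j) * 2 ^ (k - j))%N%:Z.

(* Both S_1 and S_2 equal the unrestricted alternating sum over all subfamilies
   G'' of P_a and all nonempty G' of N^- (resp. N^+): a family of h-subsets whose
   union has at most |T| - k topes has at most B members, so the side conditions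
   only discard terms whose union leaves no room for k topes, where Q vanishes;
   and in E(G) the Moebius value mu(0^, y) is the signed number of subfamilies of
   G with union y.  Each Q(U) counts the k-sets of topes (antipodal-free ones in
   (ii)) avoiding U, so by inclusion-exclusion the unrestricted sum counts the
   k-sets meeting every member of P_a and of N^-, minus those meeting every
   member of P_a and of N^+.  As every half T^+-_e has |T|/2 elements, a k-set
   meets all h-subsets of it iff it has a strict majority in it; so the two
   counts are the committees of the reorientation and of M. *)

From HB Require Import structures.
From mathcomp Require Import all_boot all_order all_algebra zify.
Import Order.TTheory GRing.Theory Num.Theory.
Set Implicit Arguments. Unset Strict Implicit. Unset Printing Implicit Defensive.

Section CountSubsets.
Variable T : finType.
Implicit Types (Z K : {set T}) (P : pred {set T}).

Definition count_subsets Z m P :=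
  #|[set K : {set T} | [&& K \subset Z, #|K| == m & P K]]|.

Lemma eq_count_subsets Z m P P' :
  (forall K, K \subset Z -> P K = P' K) -> count_subsets Z m P = count_subsets Z m P'.
Proof.
move=> eqP'; apply: eq_card => K; rewrite !inE.
by case KZ: (K \subset Z) => //=; rewrite eqP'.
Qed.

Lemma count_subsets_setD1 Z m P x :
  count_subsets Z m (fun K => P K && (x \notin K)) = count_subsets (Z :\ x) m P.
Proof.
apply: eq_card => K; rewrite !inE subsetD1.
by case: (K \subset Z); case: (x \in K); rewrite /= ?andbF ?andbT.
Qed.

Lemma count_subsets0 Z P : count_subsets Z 0 P = P set0.
Proof.
rewrite /count_subsets; case P0: (P set0).
  apply/eqP/cards1P; exists set0; apply/setP => K; rewrite !inE cards_eq0.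
  by case: eqP => [->|]; rewrite ?sub0set ?P0 ?andbF.
apply/eqP; rewrite cards_eq0; apply/eqP/setP => K; rewrite !inE cards_eq0.
by case: eqP => [->|]; rewrite ?P0 ?andbF.
Qed.

Lemma count_subsets_set0 m P : count_subsets set0 m.+1 P = 0.
Proof.
apply: eq_card0 => K; rewrite !inE subset0.
by apply/negP => /and3P[/eqP -> ]; rewrite cards0.
Qed.

Lemma count_subsetsS Z m P x : x \in Z ->
  count_subsets Z m.+1 P =
  count_subsets (Z :\ x) m.+1 P + count_subsets (Z :\ x) m (fun K => P (x |: K)).
Proof.
move=> xZ; rewrite /count_subsets; set S := [set K : {set T} | _].
rewrite -(cardsID [set K : {set T} | x \in K] S) addnC; congr (_ + _).
  apply: eq_card => K; rewrite !inE subsetD1.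
  by case: (K \subset Z); case: (x \in K); rewrite /= ?andbF.
pose S' := [set K : {set T} | [&& K \subset Z :\ x, #|K| == m & P (x |: K)]].
have -> : S :&: [set K : {set T} | x \in K] = (fun K => x |: K) @: S'.
  apply/setP => K; rewrite !inE; apply/idP/imsetP => [|[K' K'S ->]].
    case/andP=> /and3P[KZ /eqP cK PK] xK; exists (K :\ x); last by rewrite setD1K.
    rewrite inE setSD // setD1K // PK andbT.
    by move: cK; rewrite (cardsD1 x) xK /= add1n => -[->].
  move: K'S; rewrite inE subsetD1 => /and3P[/andP[K'Z xK'] /eqP cK' PK'].
  by rewrite setU11 andbT subUset sub1set xZ K'Z cardsU1 xK' cK' eqxx PK'.
rewrite card_in_imset // => K1 K2; rewrite !inE !subsetD1.
move=> /and3P[/andP[_ x1] _ _] /and3P[/andP[_ x2] _ _] E.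
by rewrite -(setU1K x1) -(setU1K x2) E.
Qed.

End CountSubsets.

Section AntipodalFree.
Variables (T : finType) (neg : T -> T).
Hypotheses (negK : involutive neg) (neg_neq : forall x, neg x != x).
Implicit Types (A W K : {set T}) (x : T).

Definition antipodal_free K := [forall x, (x \in K) ==> (neg x \notin K)].

Definition neg_closed W := forall x, x \in W -> neg x \in W.

Lemma antipodal_free0 : antipodal_free set0.
Proof. by apply/forallP => x; rewrite in_set0. Qed.

Lemma antipodal_freeU1 x K : x \notin K ->
  antipodal_free (x |: K) = antipodal_free K && (neg x \notin K).
Proof.
move=> xK; apply/forallP/andP => [afK|[/forallP afK nxK] y].
  split; last by have := implyP (afK x) (setU11 _ _); rewrite in_setU1 negb_or => /andP[].
  apply/forallP => y; apply/implyP => yK.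
  by have := implyP (afK y) (setU1r _ yK); rewrite in_setU1 negb_or => /andP[].
apply/implyP; rewrite !in_setU1 => /orP[/eqP ->|yK]; first by rewrite negb_or neg_neq.
rewrite negb_or (implyP (afK y) yK) andbT; apply: contra nxK => /eqP <-.
by rewrite negK.
Qed.

(* Choose m of the #|W|/2 antipodal pairs of W, then one element of each pair. *)
Lemma count_antipodal_free_closed W m : neg_closed W ->
  count_subsets W m antipodal_free = 'C(#|W| %/ 2, m) * 2 ^ m.
Proof.
have [n le_Wn] : exists n, #|W| <= n by exists #|W|.
elim: n W le_Wn m => [|n IHn] W le_Wn [|m] clW;
  rewrite ?count_subsets0 ?antipodal_free0 ?bin0 ?expn0 //.
  by move: le_Wn; rewrite leqn0 => /eqP/cards0_eq ->; rewrite count_subsets_set0 cards0 div0n bin0n.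
have [W0|[x xW]] := set_0Vmem W; first by rewrite W0 count_subsets_set0 cards0 div0n bin0n.
have nxW : neg x \in W :\ x by rewrite in_setD1 neg_neq clW.
pose W' := W :\ x :\ neg x.
have cardW : #|W| = #|W'|.+2 by rewrite (cardsD1 x W) xW (cardsD1 (neg x) (W :\ x)) nxW.
have clW' : neg_closed W'.
  move=> y; rewrite !in_setD1 => /and3P[ynx yx yW]; rewrite clW // andbT.
  by rewrite (can_eq negK) yx; apply: contra ynx => /eqP <-; rewrite negK.
have xK K : K \subset W' -> x \notin K.
  by move=> KW'; apply/negP => /(subsetP KW'); rewrite !in_setD1 eqxx andbF.
have nxK K : K \subset W' -> neg x \notin K.
  by move=> KW'; apply/negP => /(subsetP KW'); rewrite !in_setD1 eqxx.
rewrite (count_subsetsS _ _ xW) (count_subsetsS _ _ nxW).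
have -> : count_subsets W' m (fun K => antipodal_free (neg x |: K)) =
          count_subsets W' m antipodal_free.
  by apply: eq_count_subsets => K KW'; rewrite antipodal_freeU1 ?nxK // negK xK ?andbT.
have -> : count_subsets (W :\ x) m (fun K => antipodal_free (x |: K)) =
          count_subsets W' m antipodal_free.
  rewrite /W' -[RHS]count_subsets_setD1; apply: eq_count_subsets => K KW.
  by rewrite antipodal_freeU1 //; apply/negP => /(subsetP KW); rewrite !in_setD1 eqxx.
have le_W'n : #|W'| <= n by move: le_Wn; rewrite cardW; lia.
rewrite !IHn // cardW !divn2 /= binS expnS -/W'; nia.
Qed.

(* The partners of the elements of A lie outside A :|: W, so elements of A can
   be chosen freely. *)
Lemma count_antipodal_free_disjointU A W m : [disjoint A & W] ->
  (forall x, x \in A -> neg x \notin A :|: W) ->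
  count_subsets (A :|: W) m antipodal_free =
  \sum_(0 <= j < m.+1) 'C(#|A|, j) * count_subsets W (m - j) antipodal_free.
Proof.
have [n cardA] : exists n, #|A| = n by exists #|A|.
elim: n A cardA m => [|n IHn] A cardA m dAW nA.
  move/cards0_eq: cardA => ->; rewrite set0U big_nat_recl // cards0 bin0 mul1n subn0.
  by rewrite big1 ?addn0 // => j _; rewrite bin0n.
have /set0Pn[x xA] : A != set0 by rewrite -card_gt0 cardA.
pose A' := A :\ x.
have cardA' : #|A'| = n by move: cardA; rewrite (cardsD1 x) xA add1n => -[].
have xW : x \notin W by rewrite (disjointFr dAW xA).
have dA'W : [disjoint A' & W] by apply: disjointWl dAW; apply: subsetDl.
have nA' y : y \in A' -> neg y \notin A' :|: W.
  rewrite in_setD1 => /andP[_ yA]; apply: contra (nA y yA).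
  by rewrite !inE => /orP[/andP[_ ->]|->]; rewrite ?orbT.
have xAW : x \in A :|: W by rewrite inE xA.
have AWx : (A :|: W) :\ x = A' :|: W.
  by apply/setP => y; rewrite !inE; case: (eqVneq y x) => [->|]; rewrite ?(negbTE xW).
case: m => [|m]; first by rewrite count_subsets0 antipodal_free0 big_nat1 bin0 subn0
                                  count_subsets0 antipodal_free0.
rewrite (count_subsetsS _ _ xAW) AWx.
have -> : count_subsets (A' :|: W) m (fun K => antipodal_free (x |: K)) =
          count_subsets (A' :|: W) m antipodal_free.
  apply: eq_count_subsets => K KA'W; rewrite antipodal_freeU1.
    suff -> : neg x \notin K by rewrite andbT.
    by apply: contra (nA x xA) => /(subsetP KA'W); rewrite !inE => /orP[/andP[_ ->]|->];
       rewrite ?orbT.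
  by apply/negP => /(subsetP KA'W); rewrite -AWx in_setD1 eqxx.
rewrite !IHn // cardA cardA'; set g := fun i => count_subsets W i antipodal_free.
have peel p : \sum_(0 <= j < m.+2) 'C(p, j) * g (m.+1 - j) =
              g m.+1 + \sum_(0 <= j < m.+1) 'C(p, j.+1) * g (m - j).
  by rewrite big_nat_recl // bin0 mul1n subn0.
rewrite !peel; under [in RHS]eq_bigr => j _ do rewrite binS mulnDl.
by rewrite big_split /= addnA.
Qed.

End AntipodalFree.

Local Open Scope ring_scope.

Lemma sum_subsets_sign (T : finType) (A : {set T}) :
  \sum_(F : {set T} | F \subset A) (-1) ^+ #|F| = (A == set0)%:R :> int.
Proof.
have [->|/set0Pn [x xA]] := eqVneq A set0.
  by rewrite (big_pred1 set0) ?cards0 ?expr0 // => F; rewrite subset0.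
rewrite (bigID (fun F : {set T} => x \in F)) /=.
rewrite (reindex_onto (fun F => x |: F) (fun F => F :\ x)) /=; last first.
  by move=> F /andP[_ xF]; rewrite setD1K.
rewrite [X in X + _](eq_bigl (fun F : {set T} => (F \subset A) && (x \notin F))) => [|F].
  rewrite -big_split /= big1 // => F /andP[FA xF].
  by rewrite cardsU1 xF exprS mulN1r addNr.
rewrite subUset sub1set xA setU11 /=.
case xF: (x \in F); last by rewrite setU1K ?xF ?eqxx ?andbT.
suff /negbTE -> : (x |: F) :\ x != F by rewrite /= !andbF.
by apply: contraTneq xF => <-; rewrite setD11.
Qed.

Lemma card_sep_sum (T : finType) (S : {set T}) (p : pred T) :
  #|[set x in S | p x]|%:R = \sum_(x in S) (p x)%:R :> int.
Proof.
rewrite -sum1_card natr_sum big_mkcond [RHS]big_mkcond /=.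
by apply: eq_bigr => x _; rewrite inE; case: (x \in S); case: (p x).
Qed.

Lemma inclusion_exclusion_hitting (T : finType) (S : {set {set T}}) (N : {set {set T}}) :
  \sum_(F : {set {set T}} | F \subset N)
     (-1) ^+ #|F| * #|[set K in S | [disjoint K & \bigcup_(G in F) G]]|%:R
  = #|[set K in S | [forall G in N, ~~ [disjoint K & G]]]|%:R :> int.
Proof.
under eq_bigr => F _ do rewrite card_sep_sum big_distrr /=.
rewrite exchange_big /= card_sep_sum; apply: eq_bigr => K KS.
pose NK := [set G in N | [disjoint K & G]].
rewrite (eq_bigr (fun F : {set {set T}} => if F \subset NK then (-1) ^+ #|F| else 0))
  => [|F FN]; last first.
  have -> : [disjoint K & \bigcup_(G in F) G] = (F \subset NK).
    apply/bigcup_disjointP/subsetP => [KF G GF|FNK G GF].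
      by rewrite inE (subsetP FN _ GF) KF.
    by move: (FNK G GF); rewrite inE => /andP[].
  by case: (F \subset NK); rewrite ?mulr1 ?mulr0.
rewrite -big_mkcondr /= (eq_bigl (fun F : {set {set T}} => F \subset NK)) => [|F]; last first.
  apply/andP/idP => [[]//|FNK]; split=> //.
  by apply: subset_trans FNK _; apply/subsetP => G; rewrite inE => /andP[].
rewrite sum_subsets_sign; congr ((nat_of_bool _)%:R).
apply/idP/forall_inP => [/eqP NK0 G GN|KN]; last first.
  by apply/eqP/setP => G; rewrite !inE; apply/andP => -[/KN /negP].
apply/negP => dKG; suff : G \in NK by rewrite NK0 inE.
by rewrite inE GN dKG.
Qed.

Section MobiusUnionLattice.
Variable t : nat.
Implicit Types (G F : {set {set tvec t}}) (x y z : option {set tvec t}).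

Definition union_elt F : option {set tvec t} := if F == set0 then None else Some (Ufam F).

Lemma oset_union_elt F : oset (union_elt F) = Ufam F.
Proof. by rewrite /union_elt; case: eqP => [->|] //=; rewrite /Ufam big_set0. Qed.

Lemma union_elt_in_Elat G F : F \subset G -> union_elt F \in Elat G.
Proof.
rewrite /union_elt /Elat; case: eqP => [_|/eqP F0] FG; first by rewrite setU11.
by rewrite setU1r //; apply/imsetP; exists F => //; rewrite inE FG F0.
Qed.

Lemma Ele_refl y : Ele y y.
Proof. by case: y => //= A; apply: subxx. Qed.

Lemma Ele_trans x y z : Ele x y -> Ele y z -> Ele x z.
Proof. by case: x; case: y; case: z => //= A B C; apply: subset_trans. Qed.

Lemma Ele_anti y z : Ele y z -> Ele z y -> y = z.
Proof.
by case: y; case: z => //= A B AB BA; congr Some; apply/eqP; rewrite eqEsubset AB BA.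
Qed.

(* The subfamilies mapped below y are those of the members contained in y, so
   their signs cancel unless y = 0^. *)
Lemma sum_signs_below G y : y \in Elat G ->
  \sum_(F : {set {set tvec t}} | (F \subset G) && Ele (union_elt F) y) (-1) ^+ #|F|
  = (y == None)%:R :> int.
Proof.
case: y => [A|] yE /=; last first.
  rewrite (eq_bigl (pred1 set0)) => [|F]; first by rewrite big_pred1_eq cards0 expr0.
  rewrite /union_elt /=; case: eqP => [->|/eqP F0]; first by rewrite sub0set.
  by rewrite andbF; apply/esym/negbTE.
pose GA := [set g in G | g \subset A].
rewrite (eq_bigl (fun F : {set {set tvec t}} => F \subset GA)) => [|F]; last first.
  rewrite /union_elt; case: eqP => [->|_] /=.
    by rewrite sub0set andbT; apply/esym/subsetP => g; rewrite inE.
  apply/andP/subsetP => [[FG UA] g gF|FGA].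
    by rewrite inE (subsetP FG _ gF) /=; apply: subset_trans UA; apply: bigcup_sup.
  split; first by apply/subsetP => g /FGA; rewrite inE => /andP[].
  by apply/bigcupsP => g /FGA; rewrite inE => /andP[].
rewrite sum_subsets_sign; suff /negbTE -> : GA != set0 by [].
move: yE; rewrite /Elat in_setU1 /= => /imsetP[F0]; rewrite inE.
move=> /andP[F0G /set0Pn[g gF0]] [EA]; apply/set0Pn; exists g.
by rewrite inE (subsetP F0G _ gF0) /= EA; apply: bigcup_sup.
Qed.

(* The signed count of subfamilies with union y satisfies the recursion defining
   mu(0^, y), by sum_signs_below. *)
Lemma mobius_Elat G y : y \in Elat G ->
  mobius (Elat G) (@Ele t) None y =
  \sum_(F : {set {set tvec t}} | (F \subset G) && (union_elt F == y)) (-1) ^+ #|F|.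
Proof.
move: y; pose msum y := \sum_(F : {set {set tvec t}} | (F \subset G) && (union_elt F == y))
                 (-1) ^+ #|F| : int.
have msum_below z : z \in Elat G ->
    \sum_(y in Elat G | Ele y z) msum y = (z == None)%:R :> int.
  move=> zE; rewrite -(sum_signs_below zE).
  rewrite (partition_big union_elt (fun y => (y \in Elat G) && Ele y z)) /=; last first.
    by move=> F /andP[FG Fz]; rewrite union_elt_in_Elat.
  apply: eq_bigr => y /andP[yE yz]; apply: eq_bigl => F.
  by case: (union_elt F =P y) => [->|]; rewrite ?andbT ?andbF // yz andbT.
suff mob_below n y : y \in Elat G -> (#|[set z in Elat G | Ele z y]| <= n)%N ->
       mob_rec (Elat G) (@Ele t) n None y = msum y.
  move=> y yE; apply: mob_below yE _; apply: leq_trans (leqnSn _).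
  by apply: subset_leq_card; apply/subsetP => z; rewrite inE => /andP[].
elim: n y => [|n IHn] y yE.
  by rewrite leqn0 => /eqP/cards0_eq/setP/(_ y); rewrite in_set0 in_set yE Ele_refl.
move=> le_n /=; case: eqP => [<-|yN].
  have := msum_below _ (union_elt_in_Elat (sub0set G)); rewrite /union_elt eqxx /=.
  rewrite (big_pred1 None) => [-> //|z].
  by apply/andP/eqP => [[_]|->]; [case: z | rewrite /Elat setU11].
have -> : \sum_(z in Elat G | Ele z y && (z != y)) mob_rec (Elat G) (@Ele t) n None z
        = \sum_(z in Elat G | Ele z y && (z != y)) msum z.
  apply: eq_bigr => z /andP[zE /andP[zy zny]]; apply: IHn => //.
  rewrite -ltnS; apply: leq_trans le_n; apply: proper_card; rewrite properE.
  apply/andP; split.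
    by apply/subsetP => w; rewrite !in_set => /andP[-> wz]; apply: Ele_trans wz zy.
  apply/subsetPn; exists y; first by rewrite in_set yE Ele_refl.
  by rewrite in_set yE /=; apply: contra zny => yz; apply/eqP; apply: Ele_anti.
have := msum_below _ yE; rewrite (bigD1 y) /=; last by rewrite yE Ele_refl.
have -> : (y == None) = false by apply/eqP => yN0; apply: yN; rewrite yN0.
move=> /eqP; rewrite addr_eq0 => /eqP ->.
by congr (- _); apply: eq_bigl => z; rewrite andbA.
Qed.

Lemma sum_mobius_Elat G (c : pred (option {set tvec t})) (psi : option {set tvec t} -> int) :
  \sum_(y in Elat G | c y) mobius (Elat G) (@Ele t) None y * psi y =
  \sum_(F : {set {set tvec t}} | F \subset G)
     (-1) ^+ #|F| * (if c (union_elt F) then psi (union_elt F) else 0).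
Proof.
rewrite (partition_big union_elt (fun y => y \in Elat G)) /=; last first.
  by move=> F; apply: union_elt_in_Elat.
rewrite big_mkcondr /=; apply: eq_bigr => y yE; rewrite mobius_Elat //.
case cy: (c y); first by rewrite big_distrl; apply: eq_bigr => F /andP[_ /eqP ->]; rewrite cy.
by rewrite big1 // => F /andP[_ /eqP ->]; rewrite cy mulr0.
Qed.

End MobiusUnionLattice.

Lemma Tplus_sub t (Tp : {set tvec t}) e : Tplus Tp e \subset Tp.
Proof. by apply/subsetP => T; rewrite inE => /andP[]. Qed.

Lemma Tminus_sub t (Tp : {set tvec t}) e : Tminus Tp e \subset Tp.
Proof. by apply/subsetP => T; rewrite inE => /andP[]. Qed.

Lemma Ufam_setU t (F1 F2 : {set {set tvec t}}) : Ufam (F1 :|: F2) = Ufam F1 :|: Ufam F2.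
Proof. exact: bigcup_setU. Qed.

Lemma sum_andb_vanishing (I : finType) (P1 P2 : pred I) (F : I -> int) :
  (forall i, P1 i -> ~~ P2 i -> F i = 0) ->
  \sum_(i | P1 i && P2 i) F i = \sum_(i | P1 i) F i.
Proof.
move=> F0; rewrite [RHS](bigID P2) /= [X in _ = _ + X]big1 ?addr0 // => i /andP[].
exact: F0.
Qed.

Section Reduction.
Variables (t : nat) (Tp : {set tvec t}) (a : 'I_t) (k : nat).
Hypotheses (k_gt0 : (0 < k)%N) (k2_le : (k * 2 <= #|Tp|)%N).
Hypothesis card_Tplus : forall e, (#|Tplus Tp e| * 2 = #|Tp|)%N.
Hypothesis card_Tminus : forall e, (#|Tminus Tp e| * 2 = #|Tp|)%N.
Variables (R : pred {set tvec t}) (Q : {set tvec t} -> int).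
Implicit Types (F N : {set {set tvec t}}) (U X G K : {set tvec t}).
Local Notation n := #|Tp|.
Local Notation h := (hpar Tp k).
Local Notation B := (Bpar Tp k).
Local Notation P := (Pfam Tp a h).
Local Notation NM := (Nminus Tp a h).
Local Notation NP := (Nplus Tp a h).

Definition candidates := [set K : {set tvec t} | [&& K \subset Tp, #|K| == k & R K]].

Hypothesis Q_count :
  forall U, U \subset Tp -> Q U = #|[set K in candidates | [disjoint K & U]]|%:R.

Definition h_family F := forall G, G \in F -> (G \subset Tp) && (#|G| == h).

Lemma h_familyS (F1 F2 : {set {set tvec t}}) : h_family F2 -> F1 \subset F2 -> h_family F1.
Proof. by move=> hF2 F12 G GF1; apply/hF2/(subsetP F12). Qed.

Lemma h_familyU (F1 F2 : {set {set tvec t}}) : h_family F1 -> h_family F2 -> h_family (F1 :|: F2).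
Proof. by move=> hF1 hF2 G; rewrite inE => /orP[/hF1|/hF2]. Qed.

Lemma h_family_subsets_of X : X \subset Tp -> h_family (subsets_of X h).
Proof. by move=> XTp G; rewrite inE => /andP[GX ->]; rewrite (subset_trans GX XTp). Qed.

Lemma h_family_P : h_family P.
Proof. by move=> G /bigcupP[e _]; apply/h_family_subsets_of/Tplus_sub. Qed.

Lemma h_family_NM : h_family NM.
Proof. by apply: h_familyS (h_family_subsets_of (Tminus_sub _ a)) _; apply: subsetDl. Qed.

Lemma h_family_NP : h_family NP.
Proof. by apply: h_familyS (h_family_subsets_of (Tplus_sub _ a)) _; apply: subsetDl. Qed.

Lemma NM_notin_P G : G \in NM -> G \notin P.
Proof. by rewrite inE => /andP[]. Qed.

Lemma NP_notin_P G : G \in NP -> G \notin P.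
Proof. by rewrite inE => /andP[]. Qed.

Lemma Ufam_sub F : h_family F -> Ufam F \subset Tp.
Proof. by move=> hF; apply/bigcupsP => G /hF /andP[]. Qed.

Lemma hpar_gt0 : (0 < h)%N.
Proof. by rewrite /hpar; lia. Qed.

Lemma Ufam_eq0 F : h_family F -> (Ufam F == set0) = (F == set0).
Proof.
move=> hF; apply/idP/idP => [/eqP UF0|/eqP ->]; last by rewrite /Ufam big_set0.
apply/negPn/negP => /set0Pn[G GF]; have /andP[_ /eqP cardG] := hF G GF.
have : G \subset Ufam F by apply: bigcup_sup.
by rewrite UF0 subset0 => /eqP G0; move: hpar_gt0; rewrite -cardG G0 cards0.
Qed.

(* The members of F are distinct h-subsets of Ufam F. *)
Lemma card_h_family F : h_family F -> (#|Ufam F| <= n - k)%N -> (#|F| <= B)%N.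
Proof.
move=> hF le_UF; apply: leq_trans (leq_bin2l h le_UF).
rewrite -cards_draws; apply: subset_leq_card; apply/subsetP => G GF.
by have /andP[_ cardG] := hF G GF; rewrite inE cardG andbT; apply: bigcup_sup.
Qed.

Lemma Q_eq0 U : U \subset Tp -> (n - k < #|U|)%N -> Q U = 0.
Proof.
move=> UTp ltU; rewrite Q_count //; apply/eqP; rewrite pnatr_eq0 cards_eq0.
apply/eqP/setP => K; rewrite !inE; apply/negP => /andP[/and3P[KTp /eqP cardK _] dKU].
have : (#|K| <= #|Tp :\: U|)%N by apply: subset_leq_card; rewrite subsetD KTp.
by rewrite cardsDS // cardK; lia.
Qed.

Definition Q_union (G1 G2 : {set {set tvec t}}) := Q (Ufam (G1 :|: G2)).

Definition signed_sum N (G2 : {set {set tvec t}}) :=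
  \sum_(G1 : {set {set tvec t}} | (G1 \subset N) && (G1 != set0)) (-1) ^+ #|G1| * Q_union G1 G2.

Definition S_unrestricted :=
  \sum_(G2 : {set {set tvec t}} | G2 \subset P)
    (-1) ^+ #|G2| * (signed_sum NM G2 - signed_sum NP G2).

Section SignedSum.
Variable N : {set {set tvec t}}.
Hypotheses (hN : h_family N) (N_notin_P : forall G, G \in N -> G \notin P).

(* A family of h-subsets with at most n - k topes in its union has at most B
   members, so if a side condition of S_1 fails the union is too large. *)
Lemma Q_union_out_of_range (G1 G2 : {set {set tvec t}}) :
  G1 \subset N -> G2 \subset P -> G1 != set0 ->
  ~~ [&& (#|G1| + #|G2| <= B)%N, (#|Ufam G1| <= n - k)%N,
         (#|G2| < B)%N & (#|Ufam G2| <= n - k)%N] ->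
  Q_union G1 G2 = 0.
Proof.
move=> G1N G2P G1_neq0 out.
have h12 : h_family (G1 :|: G2) := h_familyU (h_familyS hN G1N) (h_familyS h_family_P G2P).
apply: Q_eq0; first exact: Ufam_sub h12.
rewrite ltnNge; apply: contra out => le_U12; rewrite Ufam_setU in le_U12.
have le_U1 : (#|Ufam G1| <= n - k)%N.
  by apply: leq_trans le_U12; rewrite subset_leq_card // subsetUl.
have le_U2 : (#|Ufam G2| <= n - k)%N.
  by apply: leq_trans le_U12; rewrite subset_leq_card // subsetUr.
have card12 : #|G1 :|: G2| = (#|G1| + #|G2|)%N.
  rewrite cardsU; suff -> : G1 :&: G2 = set0 by rewrite cards0 subn0.
  apply/setP => G; rewrite !inE; apply/negP => /andP[/(subsetP G1N) GN /(subsetP G2P) GP].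
  by move: (N_notin_P GN); rewrite GP.
have := card_h_family h12; rewrite Ufam_setU card12 => /(_ le_U12) le_B.
rewrite le_B le_U1 le_U2 /= andbT; apply: leq_trans le_B.
by rewrite -[X in (X < _)%N]add0n ltn_add2r card_gt0.
Qed.

Lemma signed_sum_restrict (G2 : {set {set tvec t}}) : G2 \subset P ->
  (#|G2| < B)%N && (#|Ufam G2| <= n - k)%N ->
  \sum_(G1 : {set {set tvec t}} | [&& G1 \subset N, (1 <= #|G1|)%N,
                 (#|G1| + #|G2| <= B)%N & (#|Ufam G1| <= n - k)%N])
     (-1) ^+ #|G1| * Q_union G1 G2 = signed_sum N G2.
Proof.
move=> G2P inG2; rewrite -[RHS](@sum_andb_vanishing _ _ (fun G1 : {set {set tvec t}} =>
            (#|G1| + #|G2| <= B)%N && (#|Ufam G1| <= n - k)%N)).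
  by apply: eq_bigl => G1; rewrite card_gt0 !andbA.
move=> G1 /andP[G1N G1_neq0] out; rewrite Q_union_out_of_range ?mulr0 //.
by apply: contra out => /and4P[-> -> _ _].
Qed.

Lemma signed_sum_out_of_range (G2 : {set {set tvec t}}) : G2 \subset P ->
  ~~ ((#|G2| < B)%N && (#|Ufam G2| <= n - k)%N) -> signed_sum N G2 = 0.
Proof.
move=> G2P out; apply: big1 => G1 /andP[G1N G1_neq0].
rewrite Q_union_out_of_range ?mulr0 //.
by apply: contra out => /and4P[_ _ -> ->].
Qed.

Lemma signed_sum_union_elt (G2 : {set {set tvec t}}) : G2 \subset P ->
  \sum_(G1 : {set {set tvec t}} | G1 \subset N) (-1) ^+ #|G1| *
     (if (0 < osize (union_elt G1) <= n - k)%N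
      then Q (oset (union_elt G1) :|: Ufam G2) else 0)
  = signed_sum N G2.
Proof.
move=> G2P; rewrite /signed_sum big_mkcondr /=; apply: eq_bigr => G1 G1N.
rewrite /osize oset_union_elt card_gt0 (Ufam_eq0 (h_familyS hN G1N)).
have [-> /=|G1_neq0] := eqVneq G1 set0; first by rewrite mulr0.
rewrite -Ufam_setU -/(Q_union G1 G2); case: leqP => // ltU1.
rewrite Q_union_out_of_range ?mulr0 //.
by apply/negP => /and4P[_]; rewrite leqNgt ltU1.
Qed.

End SignedSum.

Lemma S1_unrestricted : S1 Tp a k Q_union = S_unrestricted.
Proof.
rewrite /S1 /S_unrestricted /=.
rewrite -[RHS](@sum_andb_vanishing _ _ (fun G2 : {set {set tvec t}} =>
            (#|G2| < B)%N && (#|Ufam G2| <= n - k)%N)); last first.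
  move=> G2 G2P out.
  rewrite (signed_sum_out_of_range h_family_NM NM_notin_P G2P out).
  by rewrite (signed_sum_out_of_range h_family_NP NP_notin_P G2P out) subrr mulr0.
rewrite (eq_bigl (fun G2 : {set {set tvec t}} =>
    (G2 \subset P) && ((#|G2| < B)%N && (#|Ufam G2| <= n - k)%N))) //.
apply: eq_bigr => G2 /andP[G2P inG2].
by rewrite (signed_sum_restrict h_family_NM NM_notin_P G2P inG2)
           (signed_sum_restrict h_family_NP NP_notin_P G2P inG2).
Qed.

Lemma S2_unrestricted : S2 Tp a k (fun G1 G2 => Q (G1 :|: G2)) = S_unrestricted.
Proof.
rewrite /S2 /S_unrestricted /= sum_mobius_Elat; apply: eq_bigr => G2 G2P.
rewrite /osize oset_union_elt; case: leqP => le_U2.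
  by rewrite !sum_mobius_Elat (signed_sum_union_elt h_family_NM NM_notin_P G2P)
             (signed_sum_union_elt h_family_NP NP_notin_P G2P).
have out : ~~ ((#|G2| < B)%N && (#|Ufam G2| <= n - k)%N).
  by apply/negP => /andP[_]; rewrite leqNgt le_U2.
rewrite (signed_sum_out_of_range h_family_NM NM_notin_P G2P out).
by rewrite (signed_sum_out_of_range h_family_NP NP_notin_P G2P out) subrr.
Qed.

Definition meets_all N K := [forall G in N, ~~ [disjoint K & G]].

Lemma S_unrestricted_count :
  S_unrestricted = #|[set K in candidates | meets_all P K && meets_all NM K]|%:R
                 - #|[set K in candidates | meets_all P K && meets_all NP K]|%:R.
Proof.
have full N : h_family N ->
    \sum_(G2 : {set {set tvec t}} | G2 \subset P) (-1) ^+ #|G2| *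
       \sum_(G1 : {set {set tvec t}} | G1 \subset N) (-1) ^+ #|G1| * Q_union G1 G2
    = #|[set K in candidates | meets_all P K && meets_all N K]|%:R.
  move=> hN; under eq_bigr => G2 G2P.
    under eq_bigr => G1 G1N.
      rewrite /Q_union Q_count; last first.
        exact: Ufam_sub (h_familyU (h_familyS hN G1N) (h_familyS h_family_P G2P)).
      have -> : [set K in candidates | [disjoint K & Ufam (G1 :|: G2)]] =
                [set K in [set K in candidates | [disjoint K & Ufam G1]] |
                  [disjoint K & \bigcup_(G in G2) G]].
        by apply/setP => K; rewrite !inE Ufam_setU -setI_eq0 setIUr setU_eq0 !setI_eq0 andbA.
      over.
    rewrite big_distrr /=; over.
  rewrite exchange_big /=.
  under eq_bigr => G1 _ do under eq_bigr => G2 _ do rewrite mulrCA.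
  under eq_bigr => G1 _ do rewrite -big_distrr /= inclusion_exclusion_hitting.
  have -> : [set K in candidates | meets_all P K && meets_all N K] =
            [set K in [set K in candidates | meets_all P K] | meets_all N K].
    by apply/setP => K; rewrite !inE andbA.
  rewrite /meets_all -inclusion_exclusion_hitting; apply: eq_bigr => G1 _; congr (_ * _%:R).
  by apply: eq_card => K; rewrite !inE andbAC.
rewrite -(full _ h_family_NM) -(full _ h_family_NP) /S_unrestricted -sumrB.
apply: eq_bigr => G2 _; rewrite -mulrBr; congr (_ * _).
rewrite [in RHS](bigD1 set0) ?sub0set // [X in _ = _ - X](bigD1 set0) ?sub0set //=.
by rewrite opprD addrACA subrr add0r.
Qed.

(* A k-set misses some h-subset of X iff h <= #|X :\: K|; with #|X| = n/2 and
   h = (n - k + 1)/2 this says that K has no strict majority in X. *)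
Lemma meets_all_subsets_of (p : pred (tvec t)) K : K \in candidates ->
  (#|[set T in Tp | p T]| * 2 = n)%N ->
  meets_all (subsets_of [set T in Tp | p T] h) K = (k < 2 * #|[set T in K | p T]|)%N.
Proof.
rewrite inE => /and3P[KTp /eqP cardK _]; set X := [set T in Tp | p T] => cardX.
have XK : X :&: K = [set T in K | p T].
  apply/setP => T; rewrite !inE; apply/andP/andP => [[/andP[_ ->] ->] //|[TK ->]].
  by rewrite (subsetP KTp _ TK).
have misses_iff : meets_all (subsets_of X h) K = ~~ (h <= #|X :\: K|)%N.
  apply/forall_inP/idP => [meetsK|ltXK G].
    apply/negP => le_hXK.
    have : (0 < #|[set A : {set tvec t} | A \subset X :\: K & #|A| == h]|)%N.
      by rewrite cards_draws bin_gt0.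
    rewrite card_gt0 => /set0Pn[A]; rewrite inE subsetD => /andP[/andP[AX dAK] cardA].
    by move: (meetsK A); rewrite inE AX cardA disjoint_sym dAK => /(_ isT).
  rewrite inE => /andP[GX /eqP cardG]; apply: contra ltXK => dKG.
  by rewrite -cardG subset_leq_card // subsetD GX disjoint_sym.
have le_KpX : (#|[set T in K | p T]| <= #|X|)%N by rewrite -XK subset_leq_card ?subsetIl.
have le_Kpk : (#|[set T in K | p T]| <= k)%N.
  by rewrite -cardK subset_leq_card //; apply/subsetP => T; rewrite inE => /andP[].
rewrite misses_iff cardsD XK /hpar; move: le_KpX le_Kpk cardX.
set c := #|[set T in K | p T]|; set x := #|X| => le_cx le_ck card_x.
by apply/negP/idP; lia.
Qed.

Lemma meets_all_P K : K \in candidates ->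
  meets_all P K = [forall e, (e != a) ==> (k < 2 * #|[set T in K | T e]|)%N].
Proof.
move=> Kc; apply/forall_inP/forall_inP => [meetsK e ea|majK G /bigcupP[e ea GS]].
  rewrite -(meets_all_subsets_of Kc (card_Tplus e)).
  by apply/forall_inP => G GS; apply: meetsK; apply/bigcupP; exists e.
by move: (majK e ea); rewrite -(meets_all_subsets_of Kc (card_Tplus e)) => /forall_inP; apply.
Qed.

Lemma meets_all_setD_P X K : meets_all P K ->
  meets_all (subsets_of X h :\: P) K = meets_all (subsets_of X h) K.
Proof.
move=> meetsPK; apply/forall_inP/forall_inP => [meetsK G GS|meetsK G]; last first.
  by rewrite inE => /andP[_ /meetsK].
by case GP: (G \in P); [move/forall_inP: meetsPK; apply | apply: meetsK; rewrite inE GP].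
Qed.

(* f e T is the sign of the tope T at e, in M or in a reorientation of M. *)
Definition count_majority (f : 'I_t -> tvec t -> bool) :=
  #|[set K : {set tvec t} | [&& K \subset Tp, #|K| == k, R K &
        [forall e, (#|K| < 2 * #|[set T in K | f e T]|)%N]]]|.

Lemma count_meets_all (f : 'I_t -> tvec t -> bool) (b : pred (tvec t)) :
  (forall e T, e != a -> f e T = T e) -> (forall T, f a T = b T) ->
  (#|[set T in Tp | b T]| * 2 = n)%N ->
  #|[set K in candidates | meets_all P K && meets_all (subsets_of [set T in Tp | b T] h :\: P) K]|
  = count_majority f.
Proof.
move=> f_e f_a card_b; apply: eq_card => K; rewrite !inE.
have [Kc|Knc] := boolP [&& K \subset Tp, #|K| == k & R K]; last first.
  by apply/esym/negbTE; apply: contra Knc => /and4P[-> -> -> _].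
have Kcand : K \in candidates by rewrite inE.
move: (Kc) => /and3P[-> /eqP cardK ->] /=; rewrite cardK eqxx.
have [meetsPK|nmeetsPK] /= := boolP (meets_all P K); last first.
  apply/esym/negbTE; apply: contra nmeetsPK => /forallP majK.
  rewrite meets_all_P //; apply/forall_inP => e ea.
  by have := majK e; under eq_finset => T do rewrite f_e //.
rewrite meets_all_setD_P // meets_all_subsets_of //.
move: meetsPK; rewrite meets_all_P // => /forall_inP majP.
apply/idP/forallP => [maj_b e|majK]; last by have := majK a; under eq_finset => T do rewrite f_a.
have [->|ea] := eqVneq e a; first by under eq_finset => T do rewrite f_a.
by under eq_finset => T do rewrite f_e //; apply: majP.
Qed.

Lemma S_unrestricted_majority :
  S_unrestricted = (count_majority (fun e T => flip_at a T e))%:R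
                 - (count_majority (fun e T => T e))%:R.
Proof.
rewrite S_unrestricted_count /Nminus /Nplus /Tminus /Tplus.
rewrite (@count_meets_all (fun e T => flip_at a T e) (fun T => ~~ T a)) => [|e T ea|T|]; first last.
- by have := card_Tminus a.
- by rewrite ffunE eqxx.
- by rewrite ffunE (negbTE ea).
rewrite (@count_meets_all (fun e T => T e) (fun T => T a)) //.
by have := card_Tplus a.
Qed.

End Reduction.

Section Topes.
Variable t : nat.
Implicit Types (Tp K U : {set tvec t}) (T : tvec t).

Lemma tnegK : involutive (@tneg t).
Proof. by move=> T; apply/ffunP => e; rewrite !ffunE negbK. Qed.

Lemma tneg_neq : (0 < t)%N -> forall T, tneg T != T.
Proof.
move=> t_gt0 T; apply/eqP => /(congr1 (fun T : tvec t => T (Ordinal t_gt0))).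
by rewrite ffunE; case: (T _).
Qed.

Lemma flip_atK a : involutive (@flip_at t a).
Proof. by move=> T; apply/ffunP => e; rewrite !ffunE; case: eqP; rewrite ?negbK. Qed.

Lemma tneg_flip_at a T : tneg (flip_at a T) = flip_at a (tneg T).
Proof. by apply/ffunP => e; rewrite !ffunE; case: eqP. Qed.

Lemma reorient_topesE a K : reorient_topes a K = flip_at a @^-1: K.
Proof. exact/can2_imset_pre/flip_atK/flip_atK. Qed.

Lemma reorient_topesK a : involutive (@reorient_topes t a).
Proof. by move=> K; apply/setP => T; rewrite !reorient_topesE !inE flip_atK. Qed.

Lemma reorient_topes_subset a K U :
  (reorient_topes a K \subset reorient_topes a U) = (K \subset U).
Proof.
apply/idP/idP => [|KU]; last exact: imsetS.
by rewrite -{2}(reorient_topesK a K) -{2}(reorient_topesK a U); apply: imsetS.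
Qed.

Lemma antipodal_free_reorient a K :
  antipodal_free (@tneg t) (reorient_topes a K) = antipodal_free (@tneg t) K.
Proof.
apply/forallP/forallP => afK T; have := afK (flip_at a T);
  by rewrite !reorient_topesE !inE ?flip_atK tneg_flip_at ?flip_atK.
Qed.

Lemma card_committees Tp k (R : pred {set tvec t}) :
  #|[set K : {set tvec t} | [&& is_committee Tp K, #|K| == k & R K]]| =
  count_majority Tp k R (fun e T => T e).
Proof.
apply: eq_card => K; rewrite !inE /is_committee.
by case: (K \subset Tp); case: [forall e, _]; case: (#|K| == k); case: (R K).
Qed.

Lemma card_committees_reorient Tp k (R : pred {set tvec t}) a :
  (forall K, R (reorient_topes a K) = R K) ->
  #|[set K : {set tvec t} | [&& is_committee (reorient_topes a Tp) K, #|K| == k & R K]]| =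
  count_majority Tp k R (fun e T => flip_at a T e).
Proof.
move=> R_reorient; have reorient_inj := can_inj (reorient_topesK a).
rewrite -(card_preimset _ reorient_inj); apply: eq_card => K; rewrite !inE /is_committee.
rewrite R_reorient reorient_topes_subset card_imset; last exact: can_inj (flip_atK a).
have sign_count e : #|[set T in reorient_topes a K | T e]| = #|[set T in K | flip_at a T e]|.
  rewrite reorient_topesE -(card_preimset _ (can_inj (flip_atK a))).
  by apply: eq_card => T; rewrite !inE flip_atK.
have -> : [forall e, (#|K| < 2 * #|[set T in reorient_topes a K | T e]|)%N] =
          [forall e, (#|K| < 2 * #|[set T in K | flip_at a T e]|)%N].
  by apply: eq_forallb => e; rewrite sign_count.
by case: (K \subset Tp); case: [forall e, _]; case: (#|K| == k); case: (R K).
Qed.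

Lemma topes_neg_closed (L : {set covec t}) : is_OM L ->
  forall T, T \in topes L -> tneg T \in topes L.
Proof.
case=> _ negL _ _ T; rewrite !inE => /negL.
by congr (_ \in L); apply/ffunP => e; rewrite !ffunE.
Qed.

Lemma Qbin_count Tp k U : U \subset Tp ->
  Qbin Tp k U = #|[set K in candidates Tp k predT | [disjoint K & U]]|%:R.
Proof.
move=> UTp; rewrite /Qbin -natz -cardsDS // -cards_draws; congr _%:R.
apply: eq_card => K; rewrite !inE subsetD.
by case: (K \subset Tp); case: (#|K| == k); case: [disjoint K & U].
Qed.

Section NegClosed.
Variable Tp : {set tvec t}.
Hypothesis Tp_neg : forall T, T \in Tp -> tneg T \in Tp.

Lemma card_Tplus_Tminus e : #|Tplus Tp e| = #|Tminus Tp e|.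
Proof.
have Tp_negE T : (tneg T \in Tp) = (T \in Tp).
  by apply/idP/idP => [/Tp_neg|/Tp_neg //]; rewrite tnegK.
rewrite -(card_imset _ (can_inj tnegK)) (can2_imset_pre _ tnegK tnegK).
by apply: eq_card => T; rewrite !inE Tp_negE ffunE.
Qed.

Lemma card_Tplus_half e : (#|Tplus Tp e| * 2 = #|Tp|)%N.
Proof.
rewrite -(cardsID [set T : tvec t | T e] Tp) muln2 -addnn {2}card_Tplus_Tminus.
by congr (_ + _)%N; apply: eq_card => T; rewrite !inE // andbC.
Qed.

Lemma card_Tminus_half e : (#|Tminus Tp e| * 2 = #|Tp|)%N.
Proof. by rewrite -card_Tplus_Tminus card_Tplus_half. Qed.

(* An antipodal-free k-set avoiding U takes its topes from A = -U minus U,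
   whose partners all lie in U, and from the negation-closed rest W. *)
Lemma Qring_count k U : (0 < t)%N -> U \subset Tp ->
  Qring Tp k U = #|[set K in candidates Tp k (antipodal_free (@tneg t)) | [disjoint K & U]]|%:R.
Proof.
move=> t_gt0 UTp; rewrite /Qring -natz; congr _%:R.
set UU := U :|: [set tneg T | T in U]; pose A := UU :\: U; pose W := Tp :\: UU.
have UUTp : UU \subset Tp.
  rewrite subUset UTp /=; apply/subsetP => _ /imsetP[T TU ->].
  exact/Tp_neg/(subsetP UTp).
have -> : #|[set K in candidates Tp k (antipodal_free (@tneg t)) | [disjoint K & U]]| =
          count_subsets (A :|: W) k (antipodal_free (@tneg t)).
  have -> : A :|: W = Tp :\: U.
    apply/setP => T; rewrite !inE; case: (T \in U); rewrite ?andbF //=.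
    case TnU: (T \in [set tneg T0 | T0 in U]) => //=.
    by rewrite (subsetP UUTp) // /UU inE TnU orbT.
  apply: eq_card => K; rewrite !inE subsetD.
  by case: (K \subset Tp); case: (#|K| == k); case: (antipodal_free _ K); case: [disjoint K & U].
have A_neg T : T \in A -> tneg T \notin A :|: W.
  rewrite !inE => /andP[TU /orP[TU'|/imsetP[T' T'U ->]]]; first by rewrite TU' in TU.
  by rewrite tnegK T'U.
have dAW : [disjoint A & W].
  rewrite -setI_eq0; apply/eqP/setP => T; rewrite !inE.
  by case: (T \in U); case: (T \in [set tneg T0 | T0 in U]); rewrite ?andbF.
have W_neg : neg_closed (@tneg t) W.
  move=> T; rewrite !inE => /andP[TUU TTp]; rewrite (Tp_neg TTp) andbT.
  apply: contra TUU => /orP[nTU|/imsetP[T' T'U nTE]].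
    by apply/orP; right; apply/imsetP; exists (tneg T); rewrite ?tnegK.
  by rewrite -(tnegK T) nTE tnegK T'U.
have neq := tneg_neq t_gt0.
rewrite (count_antipodal_free_disjointU tnegK neq k dAW A_neg); apply: eq_bigr => j _.
by rewrite (count_antipodal_free_closed tnegK neq _ W_neg) mulnA /A /W !cardsDS // subsetUl.
Qed.

End NegClosed.
End Topes.

Unset Implicit Arguments.

Theorem mainTheorem7 (t : nat) (L : {set covec t}) (a : 'I_t) (k : nat) :
  (1 <= t)%N -> is_OM L -> simple_OM L ->
  (1 <= k)%N -> (k * 2 <= #|topes L|)%N ->
  let Tp := topes L in
  let Tr := reorient_topes a Tp in
  (* (i) *)
  (S1 Tp a k (fun G1 G2 => Qbin Tp k (Ufam (G1 :|: G2)))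
     = (kappa k Tr)%:Z - (kappa k Tp)%:Z /\
   S2 Tp a k (fun G1 G2 => Qbin Tp k (G1 :|: G2))
     = (kappa k Tr)%:Z - (kappa k Tp)%:Z) /\
  (* (ii) *)
  (S1 Tp a k (fun G1 G2 => Qring Tp k (Ufam (G1 :|: G2)))
     = (kappa_ring k Tr)%:Z - (kappa_ring k Tp)%:Z /\
   S2 Tp a k (fun G1 G2 => Qring Tp k (G1 :|: G2))
     = (kappa_ring k Tr)%:Z - (kappa_ring k Tp)%:Z).
Proof.
move=> t_gt0 OM _ k_gt0 k2_le Tp Tr.
have Tp_neg := topes_neg_closed OM.
pose diff R : int := (count_majority Tp k R (fun e T => flip_at a T e))%:R
                   - (count_majority Tp k R (fun e T => T e))%:R.
have majority_sums R (Q : {set tvec t} -> int) :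
    (forall U : {set tvec t}, U \subset Tp ->
       Q U = #|[set K in candidates Tp k R | [disjoint K & U]]|%:R) ->
    S1 Tp a k (fun G1 G2 => Q (Ufam (G1 :|: G2))) = diff R /\
    S2 Tp a k (fun G1 G2 => Q (G1 :|: G2)) = diff R.
  move=> Q_count; rewrite /diff -(S_unrestricted_majority a k_gt0 k2_le (card_Tplus_half Tp_neg)
                             (card_Tminus_half Tp_neg) Q_count).
  by split; [exact: (S1_unrestricted a k_gt0 k2_le Q_count) |
              exact: (S2_unrestricted a k_gt0 k2_le Q_count)].
have kappaE : kappa k Tp = count_majority Tp k predT (fun e T => T e).
  by rewrite -card_committees; apply: eq_card => K; rewrite !inE andbT.
have kappaE' : kappa k Tr = count_majority Tp k predT (fun e T => flip_at a T e).
  by rewrite -card_committees_reorient //; apply: eq_card => K; rewrite !inE andbT.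
have kappa_ringE :
    kappa_ring k Tp = count_majority Tp k (antipodal_free (@tneg t)) (fun e T => T e).
  exact: card_committees.
have kappa_ringE' :
    kappa_ring k Tr = count_majority Tp k (antipodal_free (@tneg t)) (fun e T => flip_at a T e).
  by rewrite -card_committees_reorient //; apply: antipodal_free_reorient.
rewrite kappaE kappaE' kappa_ringE kappa_ringE' -!natz; split.
- exact: (majority_sums predT _ (Qbin_count k)).
- exact: (majority_sums _ _ (fun U => Qring_count Tp_neg k t_gt0)).
Qed.
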